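(* Let $R\subset S$ be an $M$-crucial ring extension such that the natural map $R(X)\otimes_RS\to S(X)$ is an isomorphism (for example, if $R\subset S$ is integral or a flat epimorphism). Then $R(X)\subset S(X)$ is $MR(X)$-crucial.
   Context: Rings are commutative and unital. For a ring $A$, its Nagata ring $A(X)$ is the localization of the polynomial ring $A[X]$ at the multiplicative set of polynomials whose content (ideal generated by the coefficients) is $A$. A ring extension $A\subset B$ is $N$-crucial if $\mathrm{Supp}_A(B/A)=\{P\in\mathrm{Spec}(A)\mid A_P\neq B_P\}=\{N\}$ (then $N$ is maximal). *)

From HB Require Import structures.
From mathcomp Require Import all_boot all_order all_algebra.
Set Implicit Arguments. Unset Strict Implicit. Unset Printing Implicit Defensive.
Import GRing.Theory.
Local Open Scope ring_scope.

Definition is_ideal (A : comNzRingType) (I : A -> Prop) : Prop :=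
  [/\ I 0, (forall x y, I x -> I y -> I (x + y)) & (forall a x, I x -> I (a * x))].

Definition is_prime_ideal (A : comNzRingType) (P : A -> Prop) : Prop :=
  [/\ is_ideal P, ~ P 1 & (forall x y, P (x * y) -> P x \/ P y)].

Definition same_ideal (A : comNzRingType) (P Q : A -> Prop) : Prop :=
  forall x, P x <-> Q x.

Definition ext_ideal (A B : comNzRingType) (f : A -> B) (I : A -> Prop) (y : B) : Prop :=
  forall J : B -> Prop, is_ideal J -> (forall x, I x -> J (f x)) -> J y.

(* For a ring extension f : A -> B (f injective), P is in Supp_A(B/A), i.e.
   (B/A)_P <> 0, i.e. some b in B has no s in A \ P with s b in f(A). *)
Definition in_supp (A B : comNzRingType) (f : A -> B) (P : A -> Prop) : Prop :=
  exists b : B, forall s : A, ~ P s -> ~ (exists a : A, f a = f s * b).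

Definition crucial (A B : comNzRingType) (f : A -> B) (N : A -> Prop) : Prop :=
  [/\ injective f, is_prime_ideal N &
      forall P, is_prime_ideal P -> (in_supp f P <-> same_ideal P N)].

Definition unit_content (A : comNzRingType) (p : {poly A}) : Prop :=
  exists q : {poly A}, \sum_(i < size p) q`_i * p`_i = 1.

Definition is_localization (A B : comNzRingType) (j : {rmorphism A -> B})
  (Sig : A -> Prop) : Prop :=
  [/\ (forall s, Sig s -> exists u, j s * u = 1),
      (forall b, exists a s, Sig s /\ b * j s = j a) &
      (forall a, j a = 0 -> exists s, Sig s /\ s * a = 0)].

(* Nagata ring: j : {poly A} -> AX exhibits AX as A(X). *)
Definition is_nagata (A AX : comNzRingType) (j : {rmorphism {poly A} -> AX}) : Prop :=
  is_localization j (@unit_content A).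

(* The commutative square  f1 : A -> B, f2 : A -> C, g1 : B -> D, g2 : C -> D
   is a pushout of commutative rings, i.e. the natural map B (x)_A C -> D
   is an isomorphism. *)
Definition is_pushout (A B C D : comNzRingType) (f1 : {rmorphism A -> B})
  (f2 : {rmorphism A -> C}) (g1 : {rmorphism B -> D}) (g2 : {rmorphism C -> D}) : Prop :=
  (forall a, g1 (f1 a) = g2 (f2 a)) /\
  forall (T : comNzRingType) (h1 : {rmorphism B -> T}) (h2 : {rmorphism C -> T}),
    (forall a, h1 (f1 a) = h2 (f2 a)) ->
    (exists h : {rmorphism D -> T}, (forall b, h (g1 b) = h1 b) /\ (forall c, h (g2 c) = h2 c)) /\
    (forall h h' : {rmorphism D -> T},
        (forall b, h (g1 b) = h1 b) -> (forall c, h (g2 c) = h2 c) ->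
        (forall b, h' (g1 b) = h1 b) -> (forall c, h' (g2 c) = h2 c) ->
        forall d, h d = h' d).

(* Let M R(X) be the extension of M to the Nagata ring: it consists of the
   fractions p / v with all coefficients of p in M, and it is prime because
   M[X] is.  Supports are closed under specialisation, so Supp(S/R) = {M}
   forces M to be maximal.  If a prime Q of R(X) is in the support of
   S(X)/R(X), its contraction P to R is in the support of S/R: otherwise the
   elements of S(X) admitting a denominator outside Q form a subring containing
   R(X) and S, hence all of the pushout S(X) = R(X) (x)_R S.  So P = M, and
   maximality of M turns any fraction a / s in Q with a coefficient of a outside
   M into an element of Q of unit content, i.e. a unit; thus Q = M R(X).
   Conversely, a b in S witnessing M in Supp(S/R) also witnesses M R(X), by
   comparing coefficients.  Injectivity of R(X) -> S(X) rests on McCoy's remark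
   that polynomials of unit content are regular. *)

From HB Require Import structures.
From mathcomp Require Import all_boot all_order all_algebra.
From mathcomp Require Import boolp classical_sets zify ring.
Set Implicit Arguments. Unset Strict Implicit. Unset Printing Implicit Defensive.
Import GRing.Theory.
Local Open Scope ring_scope.
Local Open Scope classical_set_scope.

Section Ideals.
Variable A : comNzRingType.
Implicit Types (I : A -> Prop) (a x y : A).

Lemma is_ideal0 I : is_ideal I -> I 0. Proof. by case. Qed.

Lemma is_idealD I x y : is_ideal I -> I x -> I y -> I (x + y).
Proof. by case=> _ + _; apply. Qed.

Lemma is_idealMl I a x : is_ideal I -> I x -> I (a * x).
Proof. by case=> _ _; apply. Qed.

Lemma is_idealMr I a x : is_ideal I -> I x -> I (x * a).
Proof. by rewrite mulrC; apply: is_idealMl. Qed.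

Lemma is_idealN I x : is_ideal I -> I x -> I (- x).
Proof. by rewrite -mulN1r; apply: is_idealMl. Qed.

Lemma is_idealB I x y : is_ideal I -> I x -> I y -> I (x - y).
Proof. by move=> hI hx hy; apply: is_idealD => //; apply: is_idealN. Qed.

Lemma is_ideal_sum I (T : Type) (r : seq T) (P : pred T) (F : T -> A) :
  is_ideal I -> (forall k, P k -> I (F k)) -> I (\sum_(k <- r | P k) F k).
Proof. by move=> hI; apply: (big_ind I); [exact: is_ideal0 | move=> x y; exact: is_idealD]. Qed.

Definition ideal_adj I x y := exists c m, I m /\ y = c * x + m.

Lemma ideal_adj_ideal I x : is_ideal I -> is_ideal (ideal_adj I x).
Proof.
move=> hI; split.
- by exists 0, 0; split; [exact: is_ideal0 | rewrite mul0r addr0].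
- move=> _ _ [c [m [hm ->]]] [c' [m' [hm' ->]]].
  by exists (c + c'), (m + m'); split; [exact: is_idealD | ring].
- move=> a _ [c [m [hm ->]]].
  by exists (a * c), (a * m); split; [exact: is_idealMl | ring].
Qed.

Lemma ideal_adj_sub I x y : I y -> ideal_adj I x y.
Proof. by exists 0, y; rewrite mul0r add0r. Qed.

Lemma ideal_adj_mem I x : is_ideal I -> ideal_adj I x x.
Proof. by exists 1, 0; split; [exact: is_ideal0 | rewrite mul1r addr0]. Qed.

Lemma ideal_adj1 I x : is_ideal I -> ideal_adj I x 1 -> exists c, I (c * x - 1).
Proof.
move=> hI [c [m [hm e]]]; exists c.
have -> : c * x - 1 = - m by rewrite e; ring.
exact: is_idealN.
Qed.

Definition maximal_ideal I := forall x, ~ I x -> exists c, I (c * x - 1).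

Lemma maximal_ideal_prime I : is_ideal I -> ~ I 1 -> maximal_ideal I -> is_prime_ideal I.
Proof.
move=> hI I1 Imax; split => // x y Ixy.
apply: contrapT => /not_orP[/Imax[c Icx] /Imax[d Idy]]; apply: I1.
have -> : 1 = (c * d) * (x * y) - (c * x - 1) * (d * y - 1) - (c * x - 1) - (d * y - 1) by ring.
have Icdxy := is_idealMl (c * d) hI Ixy.
have Iprod := is_idealMl (c * x - 1) hI Idy.
by apply: (is_idealB hI _ Idy); apply: (is_idealB hI _ Icx); apply: is_idealB hI Icdxy Iprod.
Qed.

End Ideals.

Lemma prime_ideal_comap (A B : comNzRingType) (f : {rmorphism A -> B}) (Q : B -> Prop) :
  is_prime_ideal Q -> is_prime_ideal (Q \o f).
Proof.
case=> hQ Q1 Qprime; split => [|/=|x y /=]; last by rewrite rmorphM => /Qprime.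
- split => [|x y|a x] /=; rewrite ?rmorph0 ?rmorphD ?rmorphM.
  + exact: is_ideal0 hQ.
  + exact: is_idealD hQ.
  + exact: is_idealMl hQ.
- by rewrite rmorph1.
Qed.

Section Krull.
Variables (A : comNzRingType) (I : A -> Prop).
Hypotheses (I_ideal : is_ideal I) (I1 : ~ I 1).

Definition proper_ideal_over (J : set A) := [/\ is_ideal J, I `<=` J & ~ J 1].

Lemma bigcup_chain_proper_ideal (F : set (set A)) (J0 : set A) :
  (forall J x, F J -> J x -> proper_ideal_over J) -> total_on F subset ->
  F J0 -> proper_ideal_over J0 -> proper_ideal_over (\bigcup_(J in F) J).
Proof.
move=> Fp Ftot FJ0 [J0_ideal I_J0 _].
have ideal_of J x : F J -> J x -> is_ideal J by move=> FJ /(Fp _ _ FJ)[].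
split.
- split.
  + by exists J0 => //; apply: is_ideal0.
  + move=> x y [J FJ Jx] [K FK Ky].
    case: (Ftot J K FJ FK) => [JK | KJ].
    * by exists K => //; apply: is_idealD (ideal_of _ _ FK Ky) (JK _ Jx) Ky.
    * by exists J => //; apply: is_idealD (ideal_of _ _ FJ Jx) Jx (KJ _ Ky).
  + move=> a x [J FJ Jx]; exists J => //; exact: is_idealMl (ideal_of _ _ FJ Jx) _.
- by move=> x Ix; exists J0 => //; apply: I_J0.
- by case=> J FJ J1; have [] := Fp _ _ FJ J1.
Qed.

Lemma exists_maximal_ideal_over :
  exists P, [/\ is_ideal P, I `<=` P, ~ P 1 & maximal_ideal P].
Proof.
(* The empty chain is also fed to [Zorn_bigcup]; its union is [set0]. *)
pose PP J := J = set0 \/ proper_ideal_over J.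
have PP_proper J x : PP J -> J x -> proper_ideal_over J by case=> // ->.
have [|P [PP_P P_max]] := @Zorn_bigcup _ PP.
  move=> F FP Ftot.
  have [[J0 FJ0 /set0P[x J0x]] | F0] := pselect (exists2 J, F J & J != set0).
    right; apply: (@bigcup_chain_proper_ideal _ J0) => //.
    - by move=> J y FJ; apply: PP_proper (FP _ FJ).
    - exact: PP_proper (FP _ FJ0) J0x.
  left; apply/seteqP; split => // x [J FJ Jx].
  by apply: F0; exists J => //; apply/set0P; exists x.
have [P_ideal I_P P1] : proper_ideal_over P.
  case: PP_P => // P0; exfalso; apply: (P_max I); last by right; split.
  by rewrite P0; split => [//|/(_ 0 (is_ideal0 I_ideal))].
exists P; split => // x Px; apply: contrapT => no_c.
have P_adj : P `<=` ideal_adj P x by move=> y; apply: ideal_adj_sub.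
apply: (P_max (ideal_adj P x)).
  by split => // /(_ x (ideal_adj_mem _ P_ideal)).
right; split; first exact: ideal_adj_ideal.
  by move=> y /I_P /P_adj.
by move=> /(ideal_adj1 P_ideal) c; apply: no_c.
Qed.

Lemma exists_prime_ideal_over : exists P, is_prime_ideal P /\ I `<=` P.
Proof.
have [P [P_ideal I_P P1 P_max]] := exists_maximal_ideal_over.
by exists P; split => //; apply: maximal_ideal_prime.
Qed.

End Krull.

Lemma in_supp_sub (A B : comNzRingType) (f : A -> B) (P P' : A -> Prop) :
  P `<=` P' -> in_supp f P -> in_supp f P'.
Proof. by move=> PP' [b hb]; exists b => s P's; apply: hb => /PP'. Qed.

Lemma crucial_maximal (A B : comNzRingType) (f : A -> B) (M : A -> Prop) :
  crucial f M -> maximal_ideal M.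
Proof.
case=> _ M_prime suppM x Mx; apply: contrapT => no_c.
have [M_ideal _ _] := M_prime.
have adj1 : ~ ideal_adj M x 1 by move=> /(ideal_adj1 M_ideal).
have [P [P_prime adj_P]] := exists_prime_ideal_over (ideal_adj_ideal x M_ideal) adj1.
have M_supp : in_supp f M by apply/(suppM M M_prime).
have /(suppM _ P_prime) PM : in_supp f P.
  by apply: in_supp_sub M_supp => y /ideal_adj_sub /adj_P.
by apply: Mx; apply/PM/adj_P/ideal_adj_mem.
Qed.

Section PolyIdeal.
Variables (A : comNzRingType) (M : A -> Prop).

Definition coefs_in (p : {poly A}) := forall k, M p`_k.

Hypothesis M_ideal : is_ideal M.

Lemma coefs_in_ideal : is_ideal coefs_in.
Proof.
split => [k|p q Mp Mq k|a p Mp k].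
- by rewrite coef0; apply: is_ideal0.
- by rewrite coefD; apply: is_idealD.
- by rewrite coefM; apply: is_ideal_sum => // j _; apply: is_idealMl.
Qed.

Lemma coefs_inC m : M m -> coefs_in m%:P.
Proof. by move=> Mm k; rewrite coefC; case: eqP => _ //; apply: is_ideal0. Qed.

Lemma unit_content_coefs_notin u : ~ M 1 -> unit_content u -> ~ coefs_in u.
Proof.
move=> M1 [q hq] Mu; apply: M1; rewrite -hq.
by apply: is_ideal_sum => // k _; apply: is_idealMl.
Qed.

Lemma coefs_notin_first p : ~ coefs_in p ->
  exists k, ~ M p`_k /\ forall j, (j < k)%N -> M p`_j.
Proof.
move=> /existsNP[k0 Mk0].
have ex_k : exists k, `[< ~ M p`_k >] by exists k0; apply/asboolP.
case: (ex_minnP ex_k) => k /asboolP Mk k_min; exists k; split => // j jk.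
by apply: contrapT => /asboolP /k_min; rewrite leqNgt jk.
Qed.

End PolyIdeal.

Lemma coefs_in_prime (A : comNzRingType) (M : A -> Prop) :
  is_prime_ideal M -> is_prime_ideal (coefs_in M).
Proof.
case=> M_ideal M1 M_prime; split; first exact: coefs_in_ideal.
  by move=> /(_ 0%N); rewrite coef1.
move=> p q Mpq; apply: contrapT => /not_orP[].
move=> /coefs_notin_first[i [Mi Mp_lt]] /coefs_notin_first[j [Mj Mq_lt]].
have i_lt : (i < (i + j).+1)%N by rewrite ltnS leq_addr.
have := Mpq (i + j)%N; rewrite coefM (bigD1 (Ordinal i_lt)) //= addKn => Mij.
have M_rest : M (\sum_(k < (i + j).+1 | k != Ordinal i_lt) p`_k * q`_(i + j - k)).
  apply: is_ideal_sum => // k ki; case: (ltngtP k i) => [k_lt|k_gt|k_eq].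
  - by apply: is_idealMr => //; apply: Mp_lt.
  - by apply: is_idealMl => //; apply: Mq_lt; have := ltn_ord k; lia.
  - by case/eqP: ki; apply: val_inj.
by have := is_idealB M_ideal Mij M_rest; rewrite addrK => /M_prime[].
Qed.

Section UnitContent.
Variable A : comNzRingType.
Implicit Types t g : {poly A}.

Lemma unit_content_coef1 t k : t`_k = 1 -> unit_content t.
Proof.
move=> tk1; exists 'X^k.
have k_lt : (k < size t)%N.
  by rewrite ltnNge; apply/negP => /leq_sizeP/(_ k (leqnn k)); rewrite tk1; apply/eqP/oner_neq0.
rewrite (bigD1 (Ordinal k_lt)) //= big1 ?coefXn ?eqxx ?mul1r ?addr0 // => j jk.
by rewrite coefXn; case: eqP => [j_eq|]; [case/eqP: jk; apply: val_inj | rewrite mul0r].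
Qed.

Lemma unit_content_scale_eq0 t g : unit_content t -> (forall k, t`_k *: g = 0) -> g = 0.
Proof.
case=> q qt tg0; rewrite -[g]scale1r -qt scaler_suml big1 // => k _.
by rewrite -scalerA tg0 scaler0.
Qed.

Lemma coefM_top t g k n : size g = n.+1 -> (forall j, (k < j)%N -> t`_j *: g = 0) ->
  (t * g)`_(k + n) = t`_k * g`_n.
Proof.
move=> sg tg0; have k_lt : (k < (k + n).+1)%N by rewrite ltnS leq_addr.
rewrite coefM (bigD1 (Ordinal k_lt)) //= addKn big1 ?addr0 // => j jk.
case: (ltngtP j k) => [j_lt|j_gt|j_eq].
- by rewrite [g`_ _]nth_default ?mulr0 // sg; lia.
- by rewrite -coefZ tg0 // coef0.
- by case/eqP: jk; apply: val_inj.
Qed.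

Lemma size_scale_lt c g n : size g = n.+1 -> c * g`_n = 0 -> (size (c *: g) < size g)%N.
Proof.
move=> sg cg0; rewrite sg ltnS; apply/leq_sizeP => j; rewrite coefZ leq_eqVlt.
by case/orP => [/eqP <- // | n_lt]; rewrite nth_default ?mulr0 // sg.
Qed.

Lemma unit_content_lreg t : unit_content t -> GRing.lreg t.
Proof.
(* Downwards in k: once t_j g = 0 for all j > k, t_k kills the leading
   coefficient of g, so t_k g is shorter than g and still annihilated by t. *)
move=> tu; apply: mulrI0_lreg => g.
have [N] := ubnP (size g); elim: N g => [//|N IH] g /ltnSE sz_g tg0.
case sg: (size g) => [|n]; first by apply/eqP; rewrite -size_poly_eq0 sg.
apply: (unit_content_scale_eq0 tu).
suff tk_g d k : (size t <= k + d)%N -> t`_k *: g = 0.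
  by move=> k; apply: (tk_g (size t)); rewrite leq_addl.
elim: d k => [|d IHd] k tk.
  by rewrite nth_default ?scale0r // -(addn0 k).
have t_above j : (k < j)%N -> t`_j *: g = 0 by move=> kj; apply: IHd; lia.
apply: IH; last by rewrite -scalerAr tg0 scaler0.
apply: leq_trans sz_g; apply: (size_scale_lt sg).
by rewrite -(coefM_top sg) // tg0 coef0.
Qed.

End UnitContent.

Definition invertible (A : comNzRingType) (x : A) := exists u, x * u = 1.

Lemma invertible1 (A : comNzRingType) : invertible (1 : A).
Proof. by exists 1; rewrite mulr1. Qed.

Lemma invertibleM (A : comNzRingType) (x y : A) :
  invertible x -> invertible y -> invertible (x * y).
Proof. by move=> [u xu] [v yv]; exists (u * v); rewrite mulrACA xu yv mulr1. Qed.

Lemma invertible_mulIr (A : comNzRingType) (x y : A) : invertible y -> x * y = 0 -> x = 0.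
Proof. by move=> [u yu] xy0; rewrite -[x]mulr1 -yu mulrA xy0 mul0r. Qed.

Section Nagata.
Variables (A AX : comNzRingType) (j : {rmorphism {poly A} -> AX}).
Hypothesis j_nagata : is_nagata j.

Lemma nagata_invertible s : unit_content s -> invertible (j s).
Proof. by case: j_nagata => + _ _; apply. Qed.

Lemma nagata_frac x : exists a s, unit_content s /\ x * j s = j a.
Proof. by case: j_nagata => _ + _; apply. Qed.

Lemma nagata_inj : injective j.
Proof.
case: j_nagata => _ _ j_ker; apply: raddf_inj => a /j_ker[s [s_uc sa0]].
by apply: (unit_content_lreg s_uc); rewrite sa0 mulr0.
Qed.

End Nagata.

Section NagataExtension.
Variables (R RX : comNzRingType) (jR : {rmorphism {poly R} -> RX}) (M : R -> Prop).
Hypotheses (jR_nagata : is_nagata jR) (M_prime : is_prime_ideal M).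

Definition nagata_ext (x : RX) :=
  exists p v, [/\ coefs_in M p, invertible (jR v) & x * jR v = jR p].

Let M_ideal : is_ideal M. Proof. by case: M_prime. Qed.
Let M1 : ~ M 1. Proof. by case: M_prime. Qed.
Let MX_ideal : is_ideal (coefs_in M). Proof. exact: coefs_in_ideal. Qed.

Lemma invertible_coefs_notin v : invertible (jR v) -> ~ coefs_in M v.
Proof.
move=> [u vu] Mv; have [b [s [s_uc ub]]] := nagata_frac jR_nagata u.
have vb : v * b = s by apply: (nagata_inj jR_nagata); rewrite rmorphM -ub mulrA vu mul1r.
by apply: (unit_content_coefs_notin M_ideal M1 s_uc); rewrite -vb; exact: is_idealMr MX_ideal Mv.
Qed.

Lemma nagata_ext_coefs x w b :
  nagata_ext x -> invertible (jR w) -> x * jR w = jR b -> coefs_in M b.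
Proof.
move=> [p [v [Mp v_inv xv]]] w_inv xw.
have bv : b * v = p * w.
  by apply: (nagata_inj jR_nagata); rewrite !rmorphM -xv -xw mulrAC.
have [_ _ MX_prime] := coefs_in_prime M_prime.
have /MX_prime[] // : coefs_in M (b * v) by rewrite bv; exact: is_idealMr MX_ideal Mp.
by move/(invertible_coefs_notin v_inv).
Qed.

Lemma nagata_ext_ideal : is_ideal nagata_ext.
Proof.
split.
- exists 0, 1; split; first exact: is_ideal0 MX_ideal.
  + by rewrite rmorph1; apply: invertible1.
  + by rewrite mul0r rmorph0.
- move=> x y [p [v [Mp v_inv xv]]] [q [w [Mq w_inv yw]]].
  exists (p * w + q * v), (v * w); split.
  + by apply: (is_idealD MX_ideal); apply: (is_idealMr _ MX_ideal).
  + by rewrite rmorphM; apply: invertibleM.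
  + by rewrite rmorphD !rmorphM -xv -yw; ring.
- move=> a x [p [v [Mp v_inv xv]]].
  have [c [s [s_uc ac]]] := nagata_frac jR_nagata a.
  exists (c * p), (s * v); split; first exact: is_idealMl MX_ideal Mp.
  + by rewrite rmorphM; apply: invertibleM => //; apply: nagata_invertible.
  + by rewrite !rmorphM -xv -ac; ring.
Qed.

Lemma nagata_ext_C m : M m -> nagata_ext (jR m%:P).
Proof.
move=> Mm; exists m%:P, 1; split; first exact: coefs_inC.
- by rewrite rmorph1; apply: invertible1.
- by rewrite rmorph1 mulr1.
Qed.

Lemma nagata_ext_min (J : RX -> Prop) :
  is_ideal J -> (forall m, M m -> J (jR m%:P)) -> nagata_ext `<=` J.
Proof.
move=> J_ideal JM x [p [v [Mp [u vu] xv]]].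
have -> : x = jR p * u by rewrite -xv -mulrA vu mulr1.
apply: (is_idealMr _ J_ideal); rewrite -[p]coefK poly_def rmorph_sum.
apply: is_ideal_sum => // k _; rewrite -mul_polyC rmorphM.
exact: is_idealMr J_ideal (JM _ (Mp k)).
Qed.

Lemma ext_ideal_nagata : ext_ideal (jR \o polyC) M = nagata_ext.
Proof.
apply/funext => x; apply/propext; split.
- by apply; [exact: nagata_ext_ideal | exact: nagata_ext_C].
- by move=> Mx J J_ideal JM; apply: nagata_ext_min Mx.
Qed.

Lemma nagata_ext_prime : is_prime_ideal nagata_ext.
Proof.
split; first exact: nagata_ext_ideal.
  move=> /(nagata_ext_coefs (w := 1) (b := 1)); rewrite rmorph1 mul1r.
  by move=> /(_ (invertible1 _) erefl 0%N); rewrite coef1.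
move=> x y xy_ext.
have [a [s [s_uc xs]]] := nagata_frac jR_nagata x.
have [b [t [t_uc yt]]] := nagata_frac jR_nagata y.
have [s_inv t_inv] := (nagata_invertible jR_nagata s_uc, nagata_invertible jR_nagata t_uc).
have [_ _ MX_prime] := coefs_in_prime M_prime.
have /MX_prime[Ma|Mb] : coefs_in M (a * b).
  apply: (nagata_ext_coefs (w := s * t) xy_ext).
    by rewrite rmorphM; apply: invertibleM.
  by rewrite !rmorphM -xs -yt; ring.
- by left; exists a, s.
- by right; exists b, t.
Qed.

Lemma prime_eq_nagata_ext (Q : RX -> Prop) : is_prime_ideal Q -> maximal_ideal M ->
  (forall r, Q (jR r%:P) <-> M r) -> Q = nagata_ext.
Proof.
move=> [Q_ideal Q1 _] M_max QM; apply/funext => x; apply/propext; split; last first.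
  by apply: nagata_ext_min => // m /QM.
move=> Qx; have [a [s [s_uc xs]]] := nagata_frac jR_nagata x.
exists a, s; split => //; last exact: nagata_invertible.
move=> k; apply: contrapT => /M_max[c Mc].
pose a' := c%:P * a - (c * a`_k - 1)%:P * 'X^k.
have a'k : a'`_k = 1 by rewrite coefB coefCM coefMXn ltnn subnn coefC eqxx; ring.
have [u a'u] := nagata_invertible jR_nagata (unit_content_coef1 a'k).
apply: Q1; rewrite -a'u; apply: (is_idealMr _ Q_ideal).
rewrite rmorphB !rmorphM -xs; apply: (is_idealB Q_ideal).
- exact: is_idealMl Q_ideal (is_idealMr _ Q_ideal Qx).
- by apply: (is_idealMr _ Q_ideal); apply/QM.
Qed.

End NagataExtension.

Section NagataMap.
Variables (R S RX SX : comNzRingType) (i : {rmorphism R -> S}).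
Variables (jR : {rmorphism {poly R} -> RX}) (jS : {rmorphism {poly S} -> SX}).
Variable phi : {rmorphism RX -> SX}.
Hypotheses (jR_nagata : is_nagata jR) (jS_nagata : is_nagata jS).
Hypothesis phiE : forall p, phi (jR p) = jS (map_poly i p).

Lemma nagata_map_inj : injective i -> injective phi.
Proof.
move=> i_inj; apply: raddf_inj => x phix0.
have [a [s [s_uc xs]]] := nagata_frac jR_nagata x.
have a0 : a = 0.
  apply: (map_inj_poly i_inj (rmorph0 i)); apply: (nagata_inj jS_nagata).
  by rewrite -phiE -xs rmorphM phix0 mul0r !rmorph0.
apply: (invertible_mulIr (nagata_invertible jR_nagata s_uc)).
by rewrite xs a0 rmorph0.
Qed.

Lemma in_supp_nagata_ext (M : R -> Prop) :
  is_prime_ideal M -> in_supp i M -> in_supp phi (nagata_ext jR M).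
Proof.
move=> M_prime [b Mb]; exists (jS b%:P) => x x_ext [y phiy].
have [p [u [u_uc xu]]] := nagata_frac jR_nagata x.
have [q [v [v_uc yv]]] := nagata_frac jR_nagata y.
have Mpv : ~ coefs_in M (p * v).
  have [_ _ MX_prime] := coefs_in_prime M_prime.
  case/MX_prime => [Mp | Mv].
  - by apply: x_ext; exists p, u; split => //; apply: nagata_invertible.
  - by have := invertible_coefs_notin jR_nagata M_prime (nagata_invertible jR_nagata v_uc); apply.
have map_qu : map_poly i (q * u) = map_poly i (p * v) * b%:P.
  apply: (nagata_inj jS_nagata).
  by rewrite [RHS]rmorphM -!phiE !rmorphM -yv -xu !rmorphM phiy; ring.
have [k Mk] : exists k, ~ M (p * v)`_k by apply/existsNP.
by apply: (Mb _ Mk); exists (q * u)`_k; rewrite -coef_map map_qu coefMC coef_map.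
Qed.

End NagataMap.

Section PushoutSubring.
Variables (A B C D : comNzRingType) (f1 : {rmorphism A -> B}) (f2 : {rmorphism A -> C}).
Variables (g1 : {rmorphism B -> D}) (g2 : {rmorphism C -> D}).
Variable E : {pred D}.
Hypothesis E_closed : subring_closed E.
Hypotheses (g1E : forall b, g1 b \in E) (g2E : forall c, g2 c \in E).

HB.instance Definition _ := GRing.isSubringClosed.Build D E E_closed.
Record subE := SubE { subE_val :> D; _ : subE_val \in E }.
HB.instance Definition _ := [isSub for subE_val].
HB.instance Definition _ := [Choice of subE by <:].
HB.instance Definition _ := [SubChoice_isSubComNzRing of subE by <:].

Definition g1_subE (b : B) : subE := SubE (g1E b).
Definition g2_subE (c : C) : subE := SubE (g2E c).

Lemma g1_subE_is_zmod_morphism : zmod_morphism g1_subE.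
Proof. by move=> x y; apply: val_inj; rewrite /= rmorphB. Qed.
Lemma g1_subE_is_monoid_morphism : monoid_morphism g1_subE.
Proof. by split => [|x y]; apply: val_inj; rewrite /= ?rmorph1 ?rmorphM. Qed.
HB.instance Definition _ := GRing.isZmodMorphism.Build B subE g1_subE g1_subE_is_zmod_morphism.
HB.instance Definition _ :=
  GRing.isMonoidMorphism.Build B subE g1_subE g1_subE_is_monoid_morphism.

Lemma g2_subE_is_zmod_morphism : zmod_morphism g2_subE.
Proof. by move=> x y; apply: val_inj; rewrite /= rmorphB. Qed.
Lemma g2_subE_is_monoid_morphism : monoid_morphism g2_subE.
Proof. by split => [|x y]; apply: val_inj; rewrite /= ?rmorph1 ?rmorphM. Qed.
HB.instance Definition _ := GRing.isZmodMorphism.Build C subE g2_subE g2_subE_is_zmod_morphism.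
HB.instance Definition _ :=
  GRing.isMonoidMorphism.Build C subE g2_subE g2_subE_is_monoid_morphism.

Lemma pushout_subring_all : is_pushout f1 f2 g1 g2 -> forall d, d \in E.
Proof.
move=> [g12 po] d.
have g12_subE a : g1_subE (f1 a) = g2_subE (f2 a) by apply: val_inj; exact: g12.
have [[h [hg1 hg2]] _] := po _ g1_subE g2_subE g12_subE.
have [_ po_uniq] := po _ g1 g2 g12.
have <- : val (h d) = d.
  by apply: (po_uniq (val \o h) idfun) => //= x; rewrite ?hg1 ?hg2.
exact: valP.
Qed.

End PushoutSubring.

Lemma in_supp_pushout (A B C D : comNzRingType) (f1 : {rmorphism A -> B})
    (f2 : {rmorphism A -> C}) (g1 : {rmorphism B -> D}) (g2 : {rmorphism C -> D})
    (Q : B -> Prop) :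
  is_pushout f1 f2 g1 g2 -> is_prime_ideal Q -> in_supp g1 Q -> in_supp f2 (Q \o f1).
Proof.
move=> po [_ Q1 Q_prime] [y Qy]; apply: contrapT => not_supp.
have QM s t : ~ Q s -> ~ Q t -> ~ Q (s * t) by move=> Qs Qt /Q_prime[].
pose E := [pred z | `[< exists2 s, ~ Q s & exists a, g1 a = g1 s * z >]].
have E_closed : subring_closed E.
  split => [|z z' /asboolP[s Qs [a sz]] /asboolP[s' Qs' [a' sz']]|
             z z' /asboolP[s Qs [a sz]] /asboolP[s' Qs' [a' sz']]]; apply/asboolP.
  - by exists 1 => //; exists 1; rewrite rmorph1 mulr1.
  - by exists (s * s'); [exact: QM | exists (a * s' - s * a'); rewrite rmorphB !rmorphM sz sz'; ring].
  - by exists (s * s'); [exact: QM | exists (a * a'); rewrite !rmorphM sz sz'; ring].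
have g1E b : g1 b \in E by apply/asboolP; exists 1 => //; exists b; rewrite rmorph1 mul1r.
have g2E c : g2 c \in E.
  apply/asboolP; apply: contrapT => no_s; apply: not_supp; exists c => s Qs [a sc].
  by apply: no_s; exists (f1 s) => //; exists (f1 a); rewrite po.1 sc rmorphM -po.1.
have /asboolP[s Qs [a sy]] := pushout_subring_all E_closed g1E g2E po y.
by apply: (Qy s Qs); exists a.
Qed.

Theorem lemma6p11
  (R S : comNzRingType) (i : {rmorphism R -> S}) (M : R -> Prop)
  (RX SX : comNzRingType)
  (jR : {rmorphism {poly R} -> RX}) (jS : {rmorphism {poly S} -> SX})
  (phi : {rmorphism RX -> SX}) :
  crucial i M ->
  is_nagata jR -> is_nagata jS ->
  (forall p : {poly R}, phi (jR p) = jS (map_poly i p)) ->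
  is_pushout (jR \o polyC) i phi (jS \o polyC) ->
  crucial phi (ext_ideal (jR \o polyC) M).
Proof.
move=> M_crucial jR_nagata jS_nagata phiE po.
have [i_inj M_prime suppM] := M_crucial.
rewrite ext_ideal_nagata //; split.
- exact: nagata_map_inj phiE i_inj.
- exact: nagata_ext_prime.
move=> Q Q_prime; split => [suppQ | QE].
- have /(suppM _ (prime_ideal_comap _ Q_prime)) QM := in_supp_pushout po Q_prime suppQ.
  by rewrite (prime_eq_nagata_ext jR_nagata Q_prime (crucial_maximal M_crucial) QM).
- have -> : Q = nagata_ext jR M by apply/funext => x; apply/propext; apply: QE.
  by apply: (in_supp_nagata_ext jR_nagata jS_nagata phiE M_prime); apply/suppM.
Qed.
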